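(* For any $r\in\big(1,(\log n)/(2\log(3e/2))\big]$ and $\gamma>0$, \[ \sum_{i=1}^\infty\frac{n^\gamma\log i}{(i^r+n)^\gamma}\ge\frac{1}{3\cdot2^\gamma r}\,n^{1/r}\log n. \] *)

From HB Require Import structures.
From mathcomp Require Import all_boot all_order all_algebra.
From mathcomp Require Import all_classical all_reals all_analysis.
Set Implicit Arguments. Unset Strict Implicit. Unset Printing Implicit Defensive.

From HB Require Import structures.
From mathcomp Require Import all_boot all_order all_algebra.
From mathcomp Require Import all_classical all_reals all_analysis.
From mathcomp Require Import ring lra zify.
Import Order.TTheory GRing.Theory Num.Theory.
Set Implicit Arguments. Unset Strict Implicit. Unset Printing Implicit Defensive.
Local Open Scope ring_scope.

(* Let N = n^(1/r) and M = floor N.  For i <= M we have i^r <= n, so the i-th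
   term is at least ln i / 2^gamma.  Pairing i with M + 1 - i gives
   sum_(i <= M) ln i >= (M/2) ln M, and for M >= 8 this is at least
   (N ln N)/3 = N ln n / (3 r).  The hypothesis on r is exactly what makes
   N >= 9. *)

Lemma sum_ln_nat_ge (R : realType) (M : nat) :
  M%:R * ln (M%:R : R) <= 2 * \sum_(i < M) ln (i.+1%:R : R).
Proof.
have -> : 2 * \sum_(i < M) ln (i.+1%:R : R) =
    \sum_(i < M) (ln (i.+1%:R : R) + ln ((M - i)%:R)).
  rewrite big_split /= mulr2n mulrDl mul1r; congr (_ + _).
  rewrite (reindex_inj rev_ord_inj) /=; apply: eq_bigr => i _.
  by congr (ln _%:R); rewrite subnS prednK // subn_gt0.
have -> : M%:R * ln (M%:R : R) = \sum_(i < M) ln (M%:R : R).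
  by rewrite sumr_const card_ord mulr_natl.
apply: ler_sum => -[i hi] _ /=.
rewrite -lnM ?posrE ?ltr0n ?subn_gt0 // -natrM.
rewrite ler_ln ?posrE ?ltr0n ?muln_gt0 ?subn_gt0 ?andbT //; last by case: (M) hi.
rewrite ler_nat; nia.
Qed.

Lemma mul_ln_succ_le (R : realType) (M : nat) : (8 <= M)%N ->
  2 * (M.+1%:R * ln (M.+1%:R : R)) <= 3 * (M%:R * ln (M%:R : R)).
Proof.
move=> hM.
have hM8 : (8 : R) <= M%:R by rewrite ler_nat.
have ln_succ : ln (M.+1%:R : R) <= ln 2 + ln (M%:R : R).
  rewrite -lnM ?posrE; [|lra|lra].
  rewrite ler_ln ?posrE; [|rewrite ltr0n //|lra].
  rewrite -natr1; lra.
have ln_M : 3 * ln (2 : R) <= ln (M%:R : R).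
  rewrite -[3]/(3%:R) mulr_natl -lnXn //.
  by rewrite ler_ln ?posrE //; lra.
have ln2_gt0 : 0 < ln (2 : R) by apply: ln_gt0; lra.
have ln_succ_ge0 : 0 <= ln (M.+1%:R : R) by apply: ln_ge0; rewrite ler1n.
rewrite -natr1; nra.
Qed.

Lemma sum_ln_truncn_ge (R : realType) (N : R) : 8 <= N ->
  N * ln N <= 3 * \sum_(i < Num.truncn N) ln (i.+1%:R : R).
Proof.
move=> hN; set M := Num.truncn N.
have /andP[hMN hNM] := truncn_itv (ltW (lt_le_trans (ltr0n R 8) hN)).
have hM8 : (8 <= M)%N by rewrite truncn_ge_nat //; lra.
have hNlnN : N * ln N <= M.+1%:R * ln (M.+1%:R : R).
  apply: ler_pM; [lra | apply: ln_ge0; lra | lra |].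
  by rewrite ler_ln ?posrE //; lra.
have := @sum_ln_nat_ge R M; have := mul_ln_succ_le R hM8; lra.
Qed.

Lemma powR_addl_le (R : realType) (a m gamma : R) :
  0 <= a -> a <= m -> 0 <= gamma ->
  powR (a + m) gamma <= powR 2 gamma * powR m gamma.
Proof.
move=> ha ham hg; rewrite -powRM; try lra.
by apply: ge0_ler_powR; rewrite ?nnegrE; lra.
Qed.

Lemma ln_div_powR2_le (R : realType) (x m r gamma : R) :
  1 <= x -> 0 < m -> 0 < r -> x <= powR m r^-1 -> 0 <= gamma ->
  ln x / powR 2 gamma <= powR m gamma * ln x / powR (powR x r + m) gamma.
Proof.
move=> hx hm hr hxN hg.
have hxr : powR x r <= m.
  have -> : m = powR (powR m r^-1) r by rewrite -powRrM mulVf ?powRr1 ?gt_eqF; lra.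
  by apply: ge0_ler_powR; rewrite ?nnegrE ?powR_ge0; lra.
have hxr0 := powR_ge0 x r.
have hD := powR_addl_le hxr0 hxr hg.
have hD0 : 0 < powR (powR x r + m) gamma by apply: powR_gt0; lra.
have hp : 0 < powR (2 : R) gamma by apply: powR_gt0.
have hmg : 0 < powR m gamma by apply: powR_gt0.
have hl : 0 <= ln x by apply: ln_ge0.
rewrite ler_pdivlMr // mulrAC ler_pdivrMr //; nra.
Qed.

Lemma powR_inv_ge9 (R : realType) (m r : R) :
  0 < m -> 0 < r -> 2 * ln 3 * r <= ln m -> 9 <= powR m r^-1.
Proof.
move=> hm hr hlnm.
have hN0 : 0 < powR m r^-1 by apply: powR_gt0.
suff : ln 9 <= ln (powR m r^-1) by rewrite ler_ln ?posrE //; lra.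
have -> : 9 = (3 : R) ^+ 2 by rewrite expr2; lra.
rewrite ln_powR lnXn // ler_pdivlMl // mulr2n; lra.
Qed.

Theorem lemma8p3 (R : realType) (n : nat) (r gamma : R)
  (hr1 : 1 < r)
  (hr2 : r <= ln (n%:R : R) / (2 * ln (3 * expR 1 / 2)))
  (hgamma : 0 < gamma) :
  (((3 * powR 2 gamma * r)^-1 * powR (n%:R : R) r^-1 * ln (n%:R : R))%:E
    <= \sum_(1 <= i <oo)
         ((powR (n%:R : R) gamma * ln (i%:R : R))
            / powR (powR (i%:R : R) r + n%:R) gamma)%:E)%E.
Proof.
have ln3_le : ln (3 : R) <= ln (3 * expR 1 / 2).
  have := expR_ge1Dx (1 : R); have := expR_gt0 (1 : R).
  by move=> ? ?; rewrite ler_ln ?posrE; lra.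
have ln3_gt0 : 0 < ln (3 : R) by apply: ln_gt0; lra.
have hlnn : 2 * ln 3 * r <= ln (n%:R : R).
  by move: hr2; rewrite ler_pdivlMr; nra.
have hn : 0 < n%:R :> R.
  rewrite ltr0n lt0n; apply: contraTneq hlnn => ->.
  by rewrite (@ln0 _ 0%:R) // -ltNge; nra.
set N := powR (n%:R : R) r^-1.
have hN9 : 9 <= N by apply: powR_inv_ge9 => //; lra.
have lnN : ln N = ln (n%:R : R) / r by rewrite ln_powR mulrC.
set M := Num.truncn N.
apply: (le_trans _ (nneseries_lim_ge M.+1 _)); last first.
  move=> k hk _; rewrite lee_fin divr_ge0 ?powR_ge0 // mulr_ge0 ?powR_ge0 //.
  by apply: ln_ge0; rewrite ler1n.
rewrite sumEFin lee_fin big_add1 big_mkord.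
set p := powR 2 gamma; have hp : 0 < p by apply: powR_gt0.
apply: (@le_trans _ _ (\sum_(i < M) ln (i.+1%:R : R) / p)).
  have := sum_ln_truncn_ge (le_trans (ler_nat R 8 9) hN9).
  have -> : (3 * p * r)^-1 * N * ln n%:R = N * ln N / 3 / p.
    by rewrite lnN; field; lra.
  by rewrite -mulr_suml ler_pM2r ?invr_gt0 //; lra.
apply: ler_sum => i _; apply: ln_div_powR2_le => //; try lra.
- by rewrite ler1n.
- apply: le_trans (_ : M%:R <= N); first by rewrite ler_nat.
  by rewrite truncn_le; lra.
Qed.
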